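(* Let $Y^{(\infty)}$ and $Y^{*(\infty)}$ be independent sequences, both with joint distribution $P_\theta$ for the same true $\theta\in\Theta$. Let $\hat\Theta_{1-\varepsilon}(Y^{(n)})$ be Robbins' regions built with weight function $\pi$ and $\hat\Theta^*_{1-\varepsilon}(Y^{*(n')})$ Robbins' regions built with a possibly different strictly positive weight function $\pi^*$, with the same $\varepsilon\in(0,1)$. Then $$P_\theta\big(\theta\in\hat\Theta_{1-\varepsilon}(Y^{(n)})\cap\hat\Theta^*_{1-\varepsilon}(Y^{*(n')})\text{ for every }n,n'\ge1\big)\ge(1-\varepsilon)^2,$$ and in particular, for all $n,n'\ge1$, $P_\theta\big(\hat\Theta_{1-\varepsilon}(Y^{(n)})\cap\hat\Theta^*_{1-\varepsilon}(Y^{*(n')})\neq\emptyset\big)\ge(1-\varepsilon)^2$.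
   Context: The joint distribution $P_\theta$ of a sequence $(Y_1,Y_2,\ldots)$, $\theta\in\Theta\subseteq\mathbb{R}^p$, is such that $Y^{(n)}=(Y_1,\ldots,Y_n)$ has density $p_n(y^{(n)};\theta)$, strictly positive on a support not depending on $\theta$, forming a consistent family in $n$. For a strictly positive probability density $\pi$ on $\Theta$, $q_n(y^{(n)})=\int_\Theta p_n(y^{(n)};\theta)\pi(\theta)d\theta$ and Robbins' region is $\hat\Theta_{1-\varepsilon}(y^{(n)})=\{\theta\in\Theta:p_n(y^{(n)};\theta)\ge\varepsilon q_n(y^{(n)})\}$; $\hat\Theta^*$ is defined in the same way with $\pi^*$ in place of $\pi$. *)

From HB Require Import structures.
From mathcomp Require Import all_boot all_order all_algebra.
From mathcomp Require Import all_classical all_reals all_analysis.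

Set Implicit Arguments.
Unset Strict Implicit.
Unset Printing Implicit Defensive.

Import Order.TTheory GRing.Theory Num.Theory.
Local Open Scope classical_set_scope.
Local Open Scope ring_scope.

(* First n coordinates of the sequence y : nat -> X, i.e. y^(n) = (y_1,..,y_n)
   (the sequence is indexed from 0, so y_1 is y 0). *)
Definition obs_prefix (X : Type) (y : nat -> X) (n : nat) : n.-tuple X :=
  [tuple y (nat_of_ord i) | i < n].

Definition tuple_restr (X : Type) (n m : nat) (h : (n <= m)%N) (y : m.-tuple X)
  : n.-tuple X := [tuple tnth y (widen_ord h i) | i < n].

(* Characterisation of Lebesgue measure on R^p = p.-tuple R (product Borel
   sigma-algebra): it gives every closed box its volume.  This determines
   the measure uniquely. *)
Definition is_lebesgue_tuple (R : realType) (p : nat)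
    (lam : {measure set (p.-tuple R) -> \bar R}) : Prop :=
  forall a b : p.-tuple R, (forall i, tnth a i <= tnth b i) ->
    lam [set x | forall i, tnth a i <= tnth x i <= tnth b i]
    = (\prod_(i < p) (tnth b i - tnth a i))%:E.

Definition mixture_density (R : realType) (p : nat)
    (lam : {measure set (p.-tuple R) -> \bar R}) (Theta : set (p.-tuple R))
    (X : Type) (n : nat) (dens : n.-tuple X -> p.-tuple R -> R)
    (pi : p.-tuple R -> R) (y : n.-tuple X) : \bar R :=
  (\int[lam]_(t in Theta) (dens y t * pi t)%:E)%E.

Definition robbins_region (R : realType) (p : nat)
    (lam : {measure set (p.-tuple R) -> \bar R}) (Theta : set (p.-tuple R))
    (X : Type) (n : nat) (dens : n.-tuple X -> p.-tuple R -> R)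
    (pi : p.-tuple R -> R) (eps : R) (y : n.-tuple X) : set (p.-tuple R) :=
  [set t | Theta t /\
     (eps%:E * mixture_density lam Theta dens pi y <= (dens y t)%:E)%E].

Definition seq_sigma d (X : measurableType d) (Omega : Type)
    (Y : nat -> Omega -> X) : set (set Omega) :=
  <<s [set E | exists i (A : set X), measurable A /\ E = Y i @^-1` A] >>.

Definition weight_function (R : realType) (p : nat)
    (lam : {measure set (p.-tuple R) -> \bar R}) (Theta : set (p.-tuple R))
    (pi : p.-tuple R -> R) : Prop :=
  measurable_fun Theta pi /\ (forall t, Theta t -> 0 < pi t) /\
  (\int[lam]_(t in Theta) (pi t)%:E = 1)%E.

From HB Require Import structures.
From mathcomp Require Import all_boot all_order all_algebra.
From mathcomp Require Import all_classical all_reals all_analysis.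
From mathcomp Require Import lra measurable_realfun.

Set Implicit Arguments.
Unset Strict Implicit.
Unset Printing Implicit Defensive.

Import Order.TTheory GRing.Theory Num.Theory.
Local Open Scope classical_set_scope.
Local Open Scope ring_scope.

(* Under P_theta the likelihood ratio q_n / p_n(. ; theta) of the mixture is
   a nonnegative martingale of mean one, so by Ville's maximal inequality it
   ever exceeds 1/eps with probability at most eps; that is exactly the event
   that theta leaves some Robbins region.  The maximal inequality is proved
   directly: on the event that the first such crossing happens at step k we
   have p_k(theta) < eps q_k, and the consistency of both families of densities
   lets these events be integrated at any later step N, giving
   P_theta(crossed by N) <= eps Q(crossed by N) <= eps for the mixture law Q.
   Monotone continuity passes to N = oo, and independence of the two
   sequences multiplies the two coverage probabilities. *)

Section tuple_prefix.
Variables (d : measure_display) (X : measurableType d).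

Lemma tuple_restr_obs_prefix (z : nat -> X) n m (h : (n <= m)%N) :
  tuple_restr h (obs_prefix z m) = obs_prefix z n.
Proof. by apply: eq_from_tnth => i; rewrite !tnth_mktuple. Qed.

Lemma measurable_tuple_restr n m (h : (n <= m)%N) :
  measurable_fun [set: m.-tuple X] (tuple_restr h).
Proof.
apply/measurable_fun_tnthP => i.
rewrite (_ : _ \o _ = (fun y : m.-tuple X => tnth y (widen_ord h i))).
  exact: measurable_tnth.
by apply/funext => y /=; rewrite tnth_mktuple.
Qed.

Lemma measurable_tuple_restr_preimage n m (h : (n <= m)%N) (A : set (n.-tuple X)) :
  measurable A -> measurable [set y : m.-tuple X | A (tuple_restr h y)].
Proof.
by move=> mA; rewrite -[X in measurable X]setTI; exact: measurable_tuple_restr.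
Qed.

End tuple_prefix.

Section lebesgue_tuple.
Variables (R : realType) (p : nat).

Definition box (a b : p.-tuple R) : set (p.-tuple R) :=
  [set x | forall i, tnth a i <= tnth x i <= tnth b i].

Lemma measurable_box a b : measurable (box a b).
Proof.
have -> : box a b = \bigcap_(i in [set: 'I_p])
    ([set: p.-tuple R] `&` (fun x => tnth x i) @^-1` `[tnth a i, tnth b i]).
  apply/seteqP; split => x /= Hx i; last by have [_ /=] := Hx i I; rewrite in_itv.
  by move=> _; split => //=; rewrite in_itv /= Hx.
apply: fin_bigcap_measurable; first exact: finite_finset.
by move=> i _; apply: measurable_tnth => //; exact: measurable_itv.
Qed.

Definition cube (k : nat) : set (p.-tuple R) :=
  box [tuple of nseq p (- k%:R)] [tuple of nseq p k%:R].

Lemma bigcup_cube : \bigcup_k cube k = setT.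
Proof.
apply/seteqP; split => // x _.
exists (Num.Def.archi_bound (\sum_i `|tnth x i|)) => // i.
rewrite !tnth_nseq -ler_norml; apply/ltW/(le_lt_trans _ (archi_boundP _)).
  by rewrite (bigD1 i) //= lerDl; apply: sumr_ge0.
by apply: sumr_ge0.
Qed.

Lemma is_lebesgue_tuple_sigma_finite (lam : {measure set (p.-tuple R) -> \bar R}) :
  is_lebesgue_tuple lam -> sigma_finite setT lam.
Proof.
move=> Hlam; exists cube; first by rewrite bigcup_cube.
move=> k; split; first exact: measurable_box.
rewrite /cube /box Hlam ?ltry // => i.
by rewrite !tnth_nseq; have := ler0n R k; lra.
Qed.

End lebesgue_tuple.

Section first_crossing.
Variables (R : realType) (d : measure_display) (X : measurableType d).
Variable mu : forall n, {measure set (n.-tuple X) -> \bar R}.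
Variables (f g : forall n, n.-tuple X -> \bar R) (eps : R).
Arguments mu : clear implicits.
Arguments f : clear implicits.
Arguments g : clear implicits.

Definition crossing N : set (N.+1.-tuple X) :=
  [set y | (f N.+1 y < eps%:E * g N.+1 y)%E].
Arguments crossing : clear implicits.

(* Crossing at some step k <= N, split as a disjoint union according to the
   first such k, so that integrals over it add up. *)
Fixpoint crossed_by N : set (N.+1.-tuple X) :=
  match N return set (N.+1.-tuple X) with
  | 0 => crossing 0
  | M.+1 => [set y | @crossed_by M (tuple_restr (leqnSn M.+1) y)] `|`
            (crossing M.+1 `\` [set y | @crossed_by M (tuple_restr (leqnSn M.+1) y)])
  end.
Arguments crossed_by : clear implicits.

Lemma crossed_by_obs_prefix (z : nat -> X) N :
  crossed_by N (obs_prefix z N.+1) <->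
  exists2 k, (k <= N)%N & crossing k (obs_prefix z k.+1).
Proof.
elim: N => [|N IH] /=.
  by split=> [|[k]]; [exists 0%N | rewrite leqn0 => /eqP ->].
rewrite tuple_restr_obs_prefix; split.
  case=> [/IH [k kN Gk]|[Gk _]]; last by exists N.+1.
  by exists k => //; exact: leqW.
case=> k; rewrite leq_eqVlt => /orP [/eqP -> Gk|kN Gk].
  by have [|] := pselect (crossed_by N (obs_prefix z N.+1)); [left|right].
by left; apply/IH; exists k.
Qed.

Hypotheses (eps_ge0 : 0 <= eps)
  (f_ge0 : forall n y, (0 < n)%N -> (0 <= f n y)%E)
  (g_ge0 : forall n y, (0 < n)%N -> (0 <= g n y)%E)
  (mf : forall n, (0 < n)%N -> measurable_fun setT (fun y : n.-tuple X => f n y))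
  (mg : forall n, (0 < n)%N -> measurable_fun setT (fun y : n.-tuple X => g n y))
  (f_consistent : forall n A, (0 < n)%N -> measurable A ->
     (\int[mu n.+1]_(y in [set y | A (tuple_restr (leqnSn n) y)]) f n.+1 y
      = \int[mu n]_(y in A) f n y)%E)
  (g_consistent : forall n A, (0 < n)%N -> measurable A ->
     (\int[mu n.+1]_(y in [set y | A (tuple_restr (leqnSn n) y)]) g n.+1 y
      = \int[mu n]_(y in A) g n y)%E).

Lemma measurable_crossing N : measurable (crossing N).
Proof.
rewrite -[X in measurable X]setTI; apply: measurable_lte => //; first exact: mf.
by apply: measurable_funeM; exact: mg.
Qed.

Lemma measurable_crossed_by N : measurable (crossed_by N).
Proof.
elim: N => [|N IH]; first exact: measurable_crossing.
apply: measurableU; first exact: measurable_tuple_restr_preimage.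
apply: measurableD; first exact: measurable_crossing.
exact: measurable_tuple_restr_preimage.
Qed.

Lemma integral_crossing_le N B : measurable B -> B `<=` crossing N ->
  (\int[mu N.+1]_(y in B) f N.+1 y <= eps%:E * \int[mu N.+1]_(y in B) g N.+1 y)%E.
Proof.
move=> mB BN; rewrite -ge0_integralZl_EFin //; last 2 first.
- by move=> y _; exact: g_ge0.
- by apply: measurable_funTS; exact: mg.
apply: ge0_le_integral => //.
- by move=> y _; exact: f_ge0.
- by apply: measurable_funTS; exact: mf.
- by apply/measurable_funTS/measurable_funeM; exact: mg.
by move=> y /BN /ltW.
Qed.

Lemma integral_crossed_by_le N :
  (\int[mu N.+1]_(y in crossed_by N) f N.+1 y
   <= eps%:E * \int[mu N.+1]_(y in crossed_by N) g N.+1 y)%E.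
Proof.
elim: N => [|N IH].
  by apply: integral_crossing_le; [exact: measurable_crossing | exact: subset_refl].
set before := [set y | crossed_by N (tuple_restr (leqnSn N.+1) y)].
have mbefore : measurable before.
  by apply: measurable_tuple_restr_preimage; exact: measurable_crossed_by.
have mnew : measurable (crossing N.+1 `\` before).
  by apply: measurableD => //; exact: measurable_crossing.
have disj : [disjoint before & crossing N.+1 `\` before].
  by rewrite disj_set2E; apply/eqP; apply/seteqP; split => y //= [? []].
rewrite /= ge0_integral_setU //; last first.
- by move=> y _; exact: f_ge0.
- by apply: measurable_funTS; exact: mf.
rewrite ge0_integral_setU //; last first.
- by move=> y _; exact: g_ge0.
- by apply: measurable_funTS; exact: mg.
rewrite f_consistent ?g_consistent //; [|exact: measurable_crossed_by..].
rewrite ge0_muleDr; [|by apply: integral_ge0 => y _; exact: g_ge0..].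
by apply: leeD => //; apply: integral_crossing_le => // y [].
Qed.

Lemma integral_crossed_by_le_eps N : (\int[mu N.+1]_y g N.+1 y <= 1)%E ->
  (\int[mu N.+1]_(y in crossed_by N) f N.+1 y <= eps%:E)%E.
Proof.
move=> g_le1; apply: le_trans (integral_crossed_by_le N) _.
rewrite -[leRHS]mule1; apply: lee_wpmul2l; first by rewrite lee_fin.
apply: le_trans g_le1; apply: ge0_subset_integral => //.
- exact: measurable_crossed_by.
- exact: mg.
- by move=> y _; exact: g_ge0.
Qed.

End first_crossing.

Arguments crossing {R d X} f g eps N.
Arguments crossed_by {R d X} f g eps N.

Section robbins_coverage.
Variables (R : realType) (p : nat) (lam : {measure set (p.-tuple R) -> \bar R}).
Hypothesis lam_lebesgue : is_lebesgue_tuple lam.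
Variables (Theta : set (p.-tuple R)) (d : measure_display) (X : measurableType d).
Hypothesis mTheta : measurable Theta.
Variable mu : forall n, {measure set (n.-tuple X) -> \bar R}.
Hypothesis mu_sigma_finite : forall n, sigma_finite setT (mu n).
Variable dens : forall n, n.-tuple X -> p.-tuple R -> R.
Arguments mu : clear implicits.
Arguments dens : clear implicits.
Hypotheses
  (mdens : forall n, (0 < n)%N ->
     measurable_fun setT (fun z : n.-tuple X * p.-tuple R => dens n z.1 z.2))
  (dens_ge0 : forall n y t, (0 < n)%N -> Theta t -> 0 <= dens n y t).
Variable w : p.-tuple R -> R.
Hypothesis w_weight : weight_function lam Theta w.

(* Copies of [lam] and [mu n] carrying their sigma-finiteness, which Fubini's
   theorem needs as a canonical structure. *)
Definition lamSF : set (p.-tuple R) -> \bar R := lam.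
HB.instance Definition _ := Measure.on lamSF.
HB.instance Definition _ := @Measure_isSigmaFinite.Build _ _ _ lamSF
  (is_lebesgue_tuple_sigma_finite lam_lebesgue).

Definition muSF n : set (n.-tuple X) -> \bar R := mu n.
Arguments muSF : clear implicits.
HB.instance Definition _ n := Measure.on (muSF n).
HB.instance Definition _ n := @Measure_isSigmaFinite.Build _ _ _ (muSF n)
  (mu_sigma_finite n).

Local Notation q n := (mixture_density lam Theta (dens n) w).

Let wTheta : p.-tuple R -> R := patch (fun=> 0) Theta w.

Lemma measurable_wTheta : measurable_fun setT wTheta.
Proof. exact: (measurable_restrictT w mTheta).1 w_weight.1. Qed.

Lemma dens_wTheta_ge0 n y t : (0 < n)%N -> 0 <= dens n y t * wTheta t.
Proof.
move=> n0; rewrite /wTheta /patch; case: ifPn => [/set_mem tT|]; last by rewrite mulr0.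
by rewrite mulr_ge0 ?dens_ge0 // ltW // w_weight.2.1.
Qed.

Lemma mixture_densityE n y :
  q n y = (\int[lam]_t (dens n y t * wTheta t)%:E)%E.
Proof.
rewrite /mixture_density integral_mkcond; apply: eq_integral => t _.
by rewrite /wTheta /patch; case: ifPn => // _; rewrite mulr0.
Qed.

Lemma mixture_density_ge0 n y : (0 < n)%N -> (0 <= q n y)%E.
Proof.
move=> n0; rewrite mixture_densityE; apply: integral_ge0 => t _.
by rewrite lee_fin dens_wTheta_ge0.
Qed.

Lemma measurable_mixture_density n : (0 < n)%N -> measurable_fun setT (q n).
Proof.
move=> n0.
pose F (z : n.-tuple X * p.-tuple R) := (dens n z.1 z.2 * wTheta z.2)%:E.
have mF : measurable_fun setT F.
  apply/measurable_EFinP/measurable_funM; first exact: mdens.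
  exact: measurableT_comp measurable_wTheta measurable_snd.
have F_ge0 z : (0 <= F z)%E by rewrite lee_fin dens_wTheta_ge0.
have := measurable_fun_fubini_tonelli_F (m2 := lamSF) F mF F_ge0.
by rewrite (_ : fubini_F lamSF F = q n) //; apply/funext => y; rewrite mixture_densityE.
Qed.

Lemma measurable_dens_at t n : (0 < n)%N ->
  measurable_fun [set: n.-tuple X] (fun y => (dens n y t)%:E).
Proof.
by move=> n0; apply/measurable_EFinP; exact: measurable_fun_pair1 t (mdens n0).
Qed.

Lemma integral_mixture_density n A : (0 < n)%N -> measurable A ->
  (\int[mu n]_(y in A) q n y =
   \int[lam]_(t in Theta) ((w t)%:E * \int[mu n]_(y in A) (dens n y t)%:E))%E.
Proof.
move=> n0 mA.
pose F (z : n.-tuple X * p.-tuple R) :=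
  (\1_A z.1 * dens n z.1 z.2 * wTheta z.2)%:E.
have mF : measurable_fun setT F.
  apply/measurable_EFinP/measurable_funM; last first.
    exact: measurableT_comp measurable_wTheta measurable_snd.
  apply: measurable_funM; last exact: mdens.
  exact: measurableT_comp (measurable_indic mA) measurable_fst.
have F_ge0 z : (0 <= F z)%E.
  by rewrite lee_fin -mulrA mulr_ge0 ?dens_wTheta_ge0.
transitivity (\int[mu n]_y \int[lam]_t F (y, t))%E.
  rewrite integral_mkcond; apply: eq_integral => y _; rewrite /patch.
  case: ifPn => yA; last first.
    transitivity (\int[lam]_t (cst 0%R t))%E; first by rewrite integral0.
    by apply: eq_integral => t _; rewrite /F indicE (negbTE yA) !mul0r.
  by rewrite mixture_densityE; apply: eq_integral => t _; rewrite /F indicE yA mul1r.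
rewrite (fubini_tonelli (m1 := muSF n) (m2 := lamSF) F mF F_ge0).
rewrite [RHS]integral_mkcond; apply: eq_integral => t _; rewrite /patch.
case: ifPn => [tT|tNT]; last first.
  transitivity (\int[mu n]_y (cst 0%R y))%E; last by rewrite integral0.
  by apply: eq_integral => y _; rewrite /F /wTheta /patch (negbTE tNT) mulr0.
rewrite -ge0_integralZl_EFin //; last first.
- by rewrite ltW // w_weight.2.1 //; exact/set_mem.
- by apply: measurable_funTS; exact: measurable_dens_at.
- by move=> y _; rewrite lee_fin dens_ge0 //; exact/set_mem.
rewrite [RHS]integral_mkcond; apply: eq_integral => y _.
rewrite /F /wTheta /patch tT indicE.
by case: ifPn => _; rewrite ?mule0 ?mul0r // -EFinM mul1r mulrC.
Qed.

Hypotheses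
  (dens_prob : forall n t, (0 < n)%N -> Theta t ->
     (\int[mu n]_y (dens n y t)%:E = 1)%E)
  (dens_consistent : forall n t (A : set (n.-tuple X)), (0 < n)%N -> Theta t ->
     measurable A ->
     (\int[mu n.+1]_(y in [set y | A (tuple_restr (leqnSn n) y)]) (dens n.+1 y t)%:E
      = \int[mu n]_(y in A) (dens n y t)%:E)%E).

Lemma mixture_density_consistent n A : (0 < n)%N -> measurable A ->
  (\int[mu n.+1]_(y in [set y | A (tuple_restr (leqnSn n) y)]) q n.+1 y
   = \int[mu n]_(y in A) q n y)%E.
Proof.
move=> n0 mA; rewrite !integral_mixture_density //; last first.
  exact: measurable_tuple_restr_preimage.
by apply: eq_integral => t /set_mem tT; rewrite dens_consistent.
Qed.

Lemma mixture_density_prob n : (0 < n)%N -> (\int[mu n]_y q n y = 1)%E.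
Proof.
move=> n0; rewrite integral_mixture_density // -w_weight.2.2.
by apply: eq_integral => t /set_mem tT; rewrite dens_prob // mule1.
Qed.

Variables (theta : p.-tuple R) (eps : R).
Hypotheses (Theta_theta : Theta theta) (eps_gt0 : 0 < eps).

Local Notation crossed N :=
  (crossed_by (fun n y => (dens n y theta)%:E) (fun n => q n) eps N).

Lemma measurable_crossed N : measurable (crossed N).
Proof.
exact: measurable_crossed_by eps (measurable_dens_at theta) measurable_mixture_density N.
Qed.

Lemma integral_crossed_by_dens_le N :
  (\int[mu N.+1]_(y in crossed N) (dens N.+1 y theta)%:E <= eps%:E)%E.
Proof.
apply: integral_crossed_by_le_eps => //.
- exact: ltW.
- by move=> n y n0; rewrite lee_fin dens_ge0.
- exact: mixture_density_ge0.
- exact: measurable_dens_at.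
- exact: measurable_mixture_density.
- by move=> n A n0 mA; exact: dens_consistent.
- exact: mixture_density_consistent.
- by rewrite mixture_density_prob.
Qed.

Variables (dO : measure_display) (Omega : measurableType dO) (P : probability Omega R).
Variable Z : nat -> Omega -> X.
Hypotheses (mZ : forall i, measurable_fun setT (Z i))
  (lawZ : forall n (A : set (n.-tuple X)), (0 < n)%N -> measurable A ->
     P [set om | A (obs_prefix (fun i => Z i om) n)]
     = (\int[mu n]_(y in A) (dens n y theta)%:E)%E).

Lemma seq_sigma_measurable E : seq_sigma Z E -> measurable E.
Proof.
move=> ZE; apply: smallest_sub (sigma_algebra_measurable Omega) _ _ ZE.
move=> _ [i [A [mA ->]]].
by rewrite -[X in measurable X]setTI; exact: mZ.
Qed.

Lemma seq_sigma_obs_prefix n A : measurable A ->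
  seq_sigma Z [set om | A (obs_prefix (fun i => Z i om) n)].
Proof.
move=> mA; rewrite -[X in seq_sigma _ X]setTI.
suff mobs : measurable_fun (T := g_sigma_algebraType
    [set E | exists i (B : set X), measurable B /\ E = Z i @^-1` B]) setT
    (fun om => obs_prefix (fun i => Z i om) n) by exact: mobs.
apply/measurable_fun_tnthP => i.
rewrite (_ : _ \o _ = Z i); last by apply/funext => om /=; rewrite tnth_mktuple.
by move=> _ B mB; rewrite setTI; apply: sub_sigma_algebra; exists (nat_of_ord i), B.
Qed.

Definition exit_by N := [set om | crossed N (obs_prefix (fun i => Z i om) N.+1)].

Lemma exit_by_nondecreasing : {homo exit_by : n m / (n <= m)%N >-> (n <= m)%O}.
Proof.
move=> n m nm; apply/subsetPset => om /crossed_by_obs_prefix [k kn Gk].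
by apply/crossed_by_obs_prefix; exists k => //; exact: leq_trans nm.
Qed.

Lemma measurable_exit_by N : measurable (exit_by N).
Proof.
exact: seq_sigma_measurable (seq_sigma_obs_prefix (measurable_crossed (N := N))).
Qed.

Lemma prob_exit_le : (P (\bigcup_N exit_by N) <= eps%:E)%E.
Proof.
have mexit := measurable_exit_by.
have mbigcup : measurable (\bigcup_N exit_by N) by exact: bigcupT_measurable.
have cvg_exit := nondecreasing_cvg_mu (mu := P) mexit mbigcup exit_by_nondecreasing.
rewrite -(cvg_lim _ cvg_exit) //; apply: lime_le.
  by apply/cvg_ex; exists (P (\bigcup_N exit_by N)).
apply: nearW => N /=; rewrite /exit_by lawZ //; last exact: measurable_crossed.
exact: integral_crossed_by_dens_le.
Qed.

Definition robbins_cover :=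
  [set om | forall n, (0 < n)%N ->
     robbins_region lam Theta (dens n) w eps (obs_prefix (fun i => Z i om) n) theta].

Lemma robbins_coverE : robbins_cover = ~` \bigcup_N exit_by N.
Proof.
apply/seteqP; split => om.
  move=> cover [N _ /crossed_by_obs_prefix [k _ Gk]].
  by have [_] := cover k.+1 isT; rewrite leNgt Gk.
move=> Nexit n n0; split => //; rewrite leNgt; apply/negP => Gn.
case: n n0 Gn => // k _ Gk; apply: Nexit.
by exists k => //; apply/crossed_by_obs_prefix; exists k.
Qed.

Lemma seq_sigma_robbins_cover : seq_sigma Z robbins_cover.
Proof.
rewrite robbins_coverE; apply: sigma_algebraC; apply: sigma_algebra_bigcup => N.
by apply: seq_sigma_obs_prefix; exact: measurable_crossed.
Qed.

Lemma prob_robbins_cover_ge : ((1 - eps)%:E <= P robbins_cover)%E.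
Proof.
have mexit : measurable (\bigcup_N exit_by N).
  exact: bigcupT_measurable measurable_exit_by.
by rewrite robbins_coverE probability_setC // EFinB leeB // prob_exit_le.
Qed.

End robbins_coverage.

Theorem mainTheorem10
  (R : realType)
  (* parameter space Theta in R^p, with Lebesgue measure lam on R^p *)
  (p : nat) (lam : {measure set (p.-tuple R) -> \bar R})
  (Hlam : is_lebesgue_tuple lam)
  (Theta : set (p.-tuple R)) (mTheta : measurable Theta)
  (* observation space and dominating measures mu_n on X^n *)
  (d : measure_display) (X : measurableType d)
  (mu : forall n : nat, {measure set (n.-tuple X) -> \bar R})
  (Hmu : forall n : nat, sigma_finite setT (mu n))
  (* the model densities p_n(y^(n); t) *)
  (dens : forall n : nat, n.-tuple X -> p.-tuple R -> R)
  (Hdens_meas : forall n : nat, (0 < n)%N ->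
     measurable_fun setT (fun z : n.-tuple X * p.-tuple R => dens n z.1 z.2))
  (Hdens_ge0 : forall n (y : n.-tuple X) t, (0 < n)%N -> Theta t -> 0 <= dens n y t)
  (Supp : forall n : nat, set (n.-tuple X))
  (Hsupp : forall n (y : n.-tuple X) t, (0 < n)%N -> Theta t ->
     (0 < dens n y t <-> Supp n y))
  (Hdens_prob : forall n t, (0 < n)%N -> Theta t ->
     (\int[mu n]_y (dens n y t)%:E = 1)%E)
  (Hconsistent : forall n t (A : set (n.-tuple X)), (0 < n)%N -> Theta t ->
     measurable A ->
     (\int[mu n.+1]_(y in [set y | A (tuple_restr (leqnSn n) y)])
         (dens n.+1 y t)%:E
      = \int[mu n]_(y in A) (dens n y t)%:E)%E)
  (* the true parameter *)
  (theta : p.-tuple R) (Htheta : Theta theta)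
  (* two independent sequences, both with joint distribution P_theta *)
  (dO : measure_display) (Omega : measurableType dO) (P : probability Omega R)
  (Y Ystar : nat -> Omega -> X)
  (mY : forall i, measurable_fun setT (Y i))
  (mYstar : forall i, measurable_fun setT (Ystar i))
  (lawY : forall n (A : set (n.-tuple X)), (0 < n)%N -> measurable A ->
     P [set w | A (obs_prefix (fun i => Y i w) n)]
     = (\int[mu n]_(y in A) (dens n y theta)%:E)%E)
  (lawYstar : forall n (A : set (n.-tuple X)), (0 < n)%N -> measurable A ->
     P [set w | A (obs_prefix (fun i => Ystar i w) n)]
     = (\int[mu n]_(y in A) (dens n y theta)%:E)%E)
  (indep : forall E F : set Omega, seq_sigma Y E -> seq_sigma Ystar F ->
     P (E `&` F) = (P E * P F)%E)
  (* weight functions and level *)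
  (pi pistar : p.-tuple R -> R)
  (Hpi : weight_function lam Theta pi) (Hpistar : weight_function lam Theta pistar)
  (eps : R) (Heps0 : 0 < eps) (Heps1 : eps < 1) :
  (((1 - eps) ^+ 2)%:E <=
     P [set w | forall n n' : nat, (0 < n)%N -> (0 < n')%N ->
        robbins_region lam Theta (dens n) pi eps (obs_prefix (fun i => Y i w) n) theta /\
        robbins_region lam Theta (dens n') pistar eps
          (obs_prefix (fun i => Ystar i w) n') theta])%E
  /\
  (forall n n' : nat, (0 < n)%N -> (0 < n')%N ->
     exists E : set Omega, measurable E /\
       E `<=` [set w | robbins_region lam Theta (dens n) pi eps
                         (obs_prefix (fun i => Y i w) n)
                       `&` robbins_region lam Theta (dens n') pistar eps
                         (obs_prefix (fun i => Ystar i w) n') !=set0] /\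
       (((1 - eps) ^+ 2)%:E <= P E)%E).
Proof.
set GY := robbins_cover lam Theta dens pi theta eps Y.
set GS := robbins_cover lam Theta dens pistar theta eps Ystar.
have sY : seq_sigma Y GY by apply: seq_sigma_robbins_cover.
have sS : seq_sigma Ystar GS by apply: seq_sigma_robbins_cover.
have PY : ((1 - eps)%:E <= P GY)%E by apply: prob_robbins_cover_ge.
have PS : ((1 - eps)%:E <= P GS)%E by apply: prob_robbins_cover_ge.
have P_GYS : (((1 - eps) ^+ 2)%:E <= P (GY `&` GS))%E.
  by rewrite indep // expr2 EFinM lee_pmul // lee_fin subr_ge0 ltW.
split.
  set E := [set w | _]; suff -> : E = GY `&` GS by [].
  apply/seteqP; split => om.
    by move=> H; split => n n0; [exact: (H n 1%N n0 isT).1 | exact: (H 1%N n isT n0).2].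
  by move=> [HY HS] n n' n0 n0'; split; [exact: HY | exact: HS].
move=> n n' n0 n0'; exists (GY `&` GS); split.
  exact: measurableI (seq_sigma_measurable mY sY) (seq_sigma_measurable mYstar sS).
by split => // om [HY HS]; exists theta; split; [exact: HY | exact: HS].
Qed.
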